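(* Let $n=p_1^{r_1}p_2^{r_2}\cdots p_k^{r_k}\ge 2$, where $p_1,\ldots,p_k$ are distinct primes and $r_i\ge1$. Then $\theta_t(G(n))=k$, and there is exactly one total clique covering of $G(n)$ consisting of precisely $k$ cliques.
   Context: For an integer $n\ge2$, $G(n)$ is the simple undirected graph whose vertex set is the set of divisors of $n$ greater than $1$, two distinct vertices $a,b$ being adjacent iff $\gcd(a,b)>1$. A clique is a set of pairwise adjacent vertices; a set $S$ of cliques of a graph is a total clique covering if every vertex lies in some member of $S$ and every edge has both endpoints in some member of $S$. $\theta_t(G)$ denotes the minimum size of a total clique covering of $G$. *)

From mathcomp Require Import all_boot.
Set Implicit Arguments. Unset Strict Implicit. Unset Printing Implicit Defensive.

(* Vertices of G(n): divisors d of n with d > 1 (encoded in 'I_n.+1). *)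
Definition divisor_vertex (n : nat) := {d : 'I_n.+1 | (1 < d) && (d %| n)}.

Definition Gadj (n : nat) (a b : divisor_vertex n) : bool :=
  (a != b) && (1 < gcdn (val (val a)) (val (val b))).

Section Cover.
Variables (T : finType) (adj : rel T).

Definition is_clique (C : {set T}) : bool :=
  [forall a in C, forall b in C, (a != b) ==> adj a b].

Definition is_tcc (S : {set {set T}}) : bool :=
  [&& [forall C in S, is_clique C],
      [forall v, exists C in S, v \in C] &
      [forall a, forall b, adj a b ==> [exists C in S, (a \in C) && (b \in C)]]].

(* minimum size of a total clique covering (default #|T|.+1 never reached
   for a symmetric adjacency relation, as singletons and edges form one) *)
Definition theta_t : nat :=
  \big[minn/#|{set T}|.+1]_(S : {set {set T}} | is_tcc S) #|S|.
End Cover.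

From mathcomp Require Import all_boot.
Set Implicit Arguments. Unset Strict Implicit. Unset Printing Implicit Defensive.

(* The prime vertices p_1, ..., p_k of G(n) are pairwise non-adjacent, so a
   total clique covering needs k distinct cliques just to cover them; the
   closed neighbourhood of p_i is the clique of all multiples of p_i, and these
   k cliques already cover every vertex and every edge (an edge {a, b} lies in
   the neighbourhood of any prime factor of gcd(a, b)).  If a covering has
   exactly k cliques, every clique contains exactly one prime p_i, so every
   edge at p_i is covered by the clique of p_i, which is therefore the whole
   closed neighbourhood of p_i. *)

Lemma bigmin_leq (I : eqType) (r : seq I) (Q : pred I) (F : I -> nat) x0 j :
  j \in r -> Q j -> \big[minn/x0]_(i <- r | Q i) F i <= F j.
Proof.
elim: r => // a r IHr; rewrite in_cons big_cons => /orP [/eqP <- -> | jr Qj].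
  exact: geq_minl.
case: (Q a); last exact: IHr.
exact: leq_trans (geq_minr _ _) (IHr jr Qj).
Qed.

Section TotalCliqueCovering.
Variables (T : finType) (adj : rel T).

Definition closed_nbhd (v : T) : {set T} := [set d | (v == d) || adj v d].

Lemma theta_t_eq_card (S : {set {set T}}) :
  is_tcc adj S -> (forall S', is_tcc adj S' -> #|S| <= #|S'|) ->
  theta_t adj = #|S|.
Proof.
move=> tccS minS; apply/eqP; rewrite eqn_leq; apply/andP; split.
  exact: bigmin_leq (mem_index_enum _) tccS.
apply: (big_ind (fun m => #|S| <= m)) => //.
- by rewrite ltnW // ltnS max_card.
- by move=> x y Sx Sy; rewrite leq_min Sx Sy.
Qed.

Variable S : {set {set T}}.
Hypothesis tccS : is_tcc adj S.

Lemma tcc_adj (C : {set T}) a b :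
  C \in S -> a \in C -> b \in C -> a != b -> adj a b.
Proof.
case/and3P: tccS => /forall_inP cliques _ _ CS aC bC neq_ab.
by move/forall_inP/(_ a aC)/forall_inP/(_ b bC)/implyP: (cliques C CS); apply.
Qed.

Lemma tcc_edge a b : adj a b -> exists2 C, C \in S & (a \in C) && (b \in C).
Proof.
case/and3P: tccS => _ _ /forallP/(_ a)/forallP/(_ b)/implyP edges.
by move/edges/exists_inP.
Qed.

Definition clique_of (v : T) : {set T} := odflt set0 [pick C in S | v \in C].

Lemma clique_ofP v : clique_of v \in S /\ v \in clique_of v.
Proof.
case/and3P: tccS => _ /forallP/(_ v)/exists_inP [C CS vC] _.
rewrite /clique_of; case: pickP => [C' /andP [] // | /(_ C)].
by rewrite CS vC.
Qed.

Variable P : {set T}.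
Hypothesis indepP : {in P &, forall a b, a != b -> ~~ adj a b}.

Lemma clique_of_inj : {in P &, injective clique_of}.
Proof.
move=> v w vP wP eq_vw; apply/eqP; apply: contraT => neq_vw.
have [vS vv] := clique_ofP v; have [_ ww] := clique_ofP w.
rewrite -eq_vw in ww.
by move: (indepP vP wP neq_vw); rewrite (tcc_adj vS vv ww neq_vw).
Qed.

Lemma independent_card_le_tcc : #|P| <= #|S|.
Proof.
rewrite -(card_in_imset clique_of_inj); apply: subset_leq_card.
by apply/subsetP => C /imsetP [v _ ->]; case: (clique_ofP v).
Qed.

Hypothesis card_S : #|S| <= #|P|.

Lemma tcc_eq_clique_of : clique_of @: P = S.
Proof.
apply/eqP; rewrite eqEcard (card_in_imset clique_of_inj) card_S andbT.
by apply/subsetP => C /imsetP [v _ ->]; case: (clique_ofP v).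
Qed.

Lemma clique_of_closed_nbhd v : v \in P -> clique_of v = closed_nbhd v.
Proof.
move=> vP; have [vS vv] := clique_ofP v.
apply/setP => d; rewrite inE; apply/idP/idP => [dv | /orP [/eqP <- // | adj_vd]].
  by have [-> // | neq_vd] := eqVneq v d; rewrite (tcc_adj vS vv dv neq_vd) orbT.
have [C CS /andP [vC dC]] := tcc_edge adj_vd.
move: CS; rewrite -tcc_eq_clique_of => /imsetP [w wP eq_C]; subst C.
have [-> // | neq_vw] := eqVneq v w.
have [wS ww] := clique_ofP w.
by move: (indepP vP wP neq_vw); rewrite (tcc_adj wS vC ww neq_vw).
Qed.

Lemma tcc_eq_closed_nbhds : S = closed_nbhd @: P.
Proof.
by rewrite -tcc_eq_clique_of; apply: eq_in_imset; apply: clique_of_closed_nbhd.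
Qed.

End TotalCliqueCovering.

Lemma card_closed_nbhd_independent (T : finType) (adj : rel T) (P : {set T}) :
  {in P &, forall a b, a != b -> ~~ adj a b} ->
  #|closed_nbhd adj @: P| = #|P|.
Proof.
move=> indepP; apply: card_in_imset => v w vP wP eq_vw.
have : v \in closed_nbhd adj w by rewrite -eq_vw inE eqxx.
rewrite inE => /orP [/eqP -> // | adj_wv].
have [-> // | neq_wv] := eqVneq w v.
by move: (indepP w v wP vP neq_wv); rewrite adj_wv.
Qed.

Section DivisorGraph.
Variable n : nat.
Hypothesis n_gt1 : 1 < n.
Local Notation V := (divisor_vertex n).

Definition dval (d : V) : nat := val (val d).

Lemma dval_inj : injective dval.
Proof. by move=> a b /val_inj/val_inj. Qed.

Lemma dval_gt1 (d : V) : 1 < dval d.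
Proof. by case/andP: (valP d). Qed.

Lemma dval_dvd (d : V) : dval d %| n.
Proof. by case/andP: (valP d). Qed.

Lemma divisor_vertexP m : 1 < m -> m %| n -> exists v : V, dval v = m.
Proof.
move=> m_gt1 m_dvd.
have m_lt : m < n.+1 by rewrite ltnS dvdn_leq // ltnW.
have mV : (1 < Ordinal m_lt) && (Ordinal m_lt %| n) by rewrite /= m_gt1 m_dvd.
by exists (exist _ (Ordinal m_lt) mV).
Qed.

Lemma prime_factor_vertex m :
  1 < m -> m %| n -> exists v : V, prime (dval v) && (dval v %| m).
Proof.
move=> m_gt1 m_dvd.
have [v eq_v] := divisor_vertexP (prime_gt1 (pdiv_prime m_gt1))
                     (dvdn_trans (pdiv_dvd m) m_dvd).
by exists v; rewrite eq_v pdiv_prime ?pdiv_dvd.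
Qed.

Definition prime_vertices : {set V} := [set v | prime (dval v)].

Lemma closed_nbhd_prime v :
  v \in prime_vertices -> closed_nbhd (@Gadj n) v = [set d | dval v %| dval d].
Proof.
rewrite inE => pv; apply/setP => d; rewrite !inE /Gadj.
have [<- | neq_vd] := eqVneq v d; first by rewrite dvdnn.
rewrite -[_ < _]/(1 < gcdn (dval v) (dval d)) -(negbK (_ %| _)) -prime_coprime //.
have : 0 < gcdn (dval v) (dval d) by rewrite gcdn_gt0 prime_gt0.
by rewrite /coprime; case: gcdn => [|[|]].
Qed.

Lemma prime_vertices_independent :
  {in prime_vertices &, forall a b, a != b -> ~~ Gadj a b}.
Proof.
move=> v w pv pw neq_vw; apply/negP => adj_vw.
have : w \in closed_nbhd (@Gadj n) v by rewrite inE adj_vw orbT.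
rewrite closed_nbhd_prime // inE.
move: pv pw; rewrite !inE => pv pw; rewrite dvdn_prime2 // => /eqP/dval_inj eq_vw.
by rewrite eq_vw eqxx in neq_vw.
Qed.

Definition prime_cliques : {set {set V}} :=
  closed_nbhd (@Gadj n) @: prime_vertices.

Lemma multiples_clique (v : V) : is_clique (@Gadj n) [set d | dval v %| dval d].
Proof.
apply/forall_inP => a; rewrite inE => va; apply/forall_inP => b.
rewrite inE => vb; apply/implyP => neq_ab; rewrite /Gadj neq_ab /=.
apply: leq_trans (dval_gt1 v) (dvdn_leq _ _); last by rewrite dvdn_gcd va vb.
by rewrite gcdn_gt0 ltnW ?dval_gt1.
Qed.

Lemma prime_cliques_tcc : is_tcc (@Gadj n) prime_cliques.
Proof.
have in_prime_cliques v : prime (dval v) ->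
    [set d | dval v %| dval d] \in prime_cliques.
  by move=> pv; rewrite -closed_nbhd_prime ?inE // imset_f ?inE.
apply/and3P; split.
- apply/forall_inP => C /imsetP [v pv ->].
  by rewrite closed_nbhd_prime //; apply: multiples_clique.
- apply/forallP => d; apply/exists_inP.
  have [v /andP [pv v_dvd]] := prime_factor_vertex (dval_gt1 d) (dval_dvd d).
  by exists [set d | dval v %| dval d]; rewrite ?in_prime_cliques ?inE.
- apply/forallP => a; apply/forallP => b; apply/implyP => /andP [_ gcd_gt1].
  have gcd_dvd : gcdn (dval a) (dval b) %| n.
    exact: dvdn_trans (dvdn_gcdl _ _) (dval_dvd a).
  have [v /andP [pv v_dvd]] := prime_factor_vertex gcd_gt1 gcd_dvd.
  apply/exists_inP; exists [set d | dval v %| dval d]; rewrite ?in_prime_cliques //.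
  by rewrite !inE (dvdn_trans v_dvd (dvdn_gcdl _ _)) (dvdn_trans v_dvd (dvdn_gcdr _ _)).
Qed.

Lemma card_prime_vertices : #|prime_vertices| = size (primes n).
Proof.
rewrite cardE -(size_map dval); apply/perm_size/uniq_perm.
- by rewrite (map_inj_uniq dval_inj) enum_uniq.
- exact: primes_uniq.
move=> p; rewrite mem_primes; apply/mapP/and3P => [[v] | [pp _ p_dvd]].
  by rewrite mem_enum inE => pv ->; rewrite pv dval_dvd ltnW.
have [v eq_vp] := divisor_vertexP (prime_gt1 pp) p_dvd.
by exists v; rewrite // mem_enum inE eq_vp.
Qed.

End DivisorGraph.

Theorem theorem4 (n : nat) (hn : 2 <= n) :
  theta_t (@Gadj n) = size (primes n) /\
  exists! S : {set {set divisor_vertex n}},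
    is_tcc (@Gadj n) S /\ #|S| = size (primes n).
Proof.
have indep := @prime_vertices_independent n.
have tcc_cliques := prime_cliques_tcc hn.
have card_cliques : #|prime_cliques n| = size (primes n).
  by rewrite card_closed_nbhd_independent // card_prime_vertices.
split.
  rewrite -card_cliques; apply: theta_t_eq_card => // S tccS.
  by rewrite card_cliques -card_prime_vertices // (independent_card_le_tcc tccS).
exists (prime_cliques n); split => // S [tccS card_S].
apply/esym/(tcc_eq_closed_nbhds tccS indep).
by rewrite card_S card_prime_vertices.
Qed.
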